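(* Let $P$ be a natural unit interval order. Then $\mathbb{Q}(t)\otimes I^P_{\mathrm{plac}}\subseteq I^P_T$.
   Context: Write $a<_Pb$ for strict order in the poset $P$ and $a\sim_Pb$ for incomparable or equal. A natural unit interval order is a finite poset $P$ together with a total order $<$ on its underlying set such that (i) $a<_Pb$ implies $a<b$, and (ii) whenever $a\sim_Pb$, $b\sim_Pc$, $a<_Pc$ (with $a,b,c$ distinct), one has $a<b<c$. $\mathcal{U}_P=\mathbb{Z}\langle u_a:a\in P\rangle$. $I^P_{\mathrm{plac}}$ is the two-sided ideal of $\mathcal{U}_P$ generated by: $u_bu_au_c-u_bu_cu_a$ when $a<_Pb$, $c\not<_Pb$, $a<_Pc$; $u_cu_au_b-u_au_cu_b$ when $b\not<_Pa$, $b<_Pc$, $a<_Pc$; $u_cu_au_b-u_bu_cu_a$ when $a\sim_Pb$, $b\sim_Pc$, $a<_Pc$. $I^P_T$ is the two-sided ideal of $\mathbb{Q}(t)\otimes_{\mathbb{Z}}\mathcal{U}_P$ generated by $u_cu_a-u_au_c$ for $a<_Pc$, and $u_bu_a-t\,u_au_b$ for $a<b$ with $a\sim_Pb$. *)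

From HB Require Import structures.
From mathcomp Require Import all_boot all_order all_algebra fraction.
Set Implicit Arguments. Unset Strict Implicit. Unset Printing Implicit Defensive.
Import Order.TTheory GRing.Theory Num.Theory.
Local Open Scope ring_scope.

(* Noncommutative polynomials R<u_x : x in T>, represented by their coefficient
   function on words (finite support is automatic for all elements we build). *)
Definition ncp (R : comPzRingType) (T : Type) := seq T -> R.

Section NC.
Variables (R : comPzRingType) (T : eqType).

Definition ncword (w : seq T) : ncp R T := fun v => (v == w)%:R.

Definition ncmul (f g : ncp R T) : ncp R T :=
  fun w => \sum_(i < (size w).+1) f (take i w) * g (drop i w).

Definition ncsub (f g : ncp R T) : ncp R T := fun w => f w - g w.
Definition ncscale (c : R) (f : ncp R T) : ncp R T := fun w => c * f w.

Definition in_ideal (G : ncp R T -> Prop) (f : ncp R T) : Prop :=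
  exists (m : nat) (c : 'I_m -> R) (a b : 'I_m -> seq T) (g : 'I_m -> ncp R T),
    (forall i, G (g i)) /\
    forall w, f w = \sum_(i < m) c i * ncmul (ncmul (ncword (a i)) (g i)) (ncword (b i)) w.
End NC.

(* Natural unit interval orders on the totally ordered set 'I_n
   (the total order < being the usual order of ordinals). *)
Definition incP n (ltP : rel 'I_n) (a b : 'I_n) : bool := ~~ ltP a b && ~~ ltP b a.

Definition is_NUIO n (ltP : rel 'I_n) : Prop :=
  [/\ irreflexive ltP, transitive ltP,
      (forall a b, ltP a b -> (a < b)%N) &
      (forall a b c, a != b -> b != c -> a != c ->
         incP ltP a b -> incP ltP b c -> ltP a c -> (a < b < c)%N)].

Definition plac_gens n (ltP : rel 'I_n) (f : ncp int 'I_n) : Prop :=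
  exists a b c : 'I_n,
    [\/ [/\ ltP a b, ~~ ltP c b, ltP a c &
          f =1 ncsub (ncword int [:: b; a; c]) (ncword int [:: b; c; a])],
        [/\ ~~ ltP b a, ltP b c, ltP a c &
          f =1 ncsub (ncword int [:: c; a; b]) (ncword int [:: a; c; b])] |
        [/\ incP ltP a b, incP ltP b c, ltP a c &
          f =1 ncsub (ncword int [:: c; a; b]) (ncword int [:: b; c; a])]].

Definition Qt := {fraction {poly rat}}.
Definition tQ : Qt := @tofrac _ ('X : {poly rat}).

Definition T_gens n (ltP : rel 'I_n) (f : ncp Qt 'I_n) : Prop :=
  (exists a c : 'I_n, ltP a c /\
     f =1 ncsub (ncword Qt [:: c; a]) (ncword Qt [:: a; c])) \/
  (exists a b : 'I_n, [/\ (a < b)%N, incP ltP a b &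
     f =1 ncsub (ncword Qt [:: b; a]) (ncscale tQ (ncword Qt [:: a; b]))]).

(* Q(t) (x)_Z I^P_plac, viewed inside Q(t) (x)_Z U_P = Q(t)<u>:
   the Q(t)-span of the images of elements of I^P_plac. *)
Definition in_Qt_tensor_plac n (ltP : rel 'I_n) (f : ncp Qt 'I_n) : Prop :=
  exists (m : nat) (c : 'I_m -> Qt) (h : 'I_m -> ncp int 'I_n),
    (forall i, in_ideal (plac_gens ltP) (h i)) /\
    forall w, f w = \sum_(i < m) c i * (h i w)%:~R.

From HB Require Import structures.
From mathcomp Require Import all_boot all_order all_algebra fraction.
From mathcomp Require Import ring.
Set Implicit Arguments. Unset Strict Implicit. Unset Printing Implicit Defensive.
Import Order.TTheory GRing.Theory Num.Theory.
Local Open Scope ring_scope.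

(* Each placactic generator is, over Q(t), a combination of two-sided
   multiples of generators of I_T.  The first two kinds are one-letter
   multiples of a commutator u_c u_a - u_a u_c with a <_P c.  For the third
   kind (a ~_P b ~_P c, a <_P c) the cases a = b and b = c are again of that
   form; otherwise the unit interval order forces a < b < c, and
     cab - bca = (ca - ac) b + a (cb - t bc) - b (ca - ac) - (ba - t ab) c,
   the two t-terms cancelling. *)

Section WordMultiplication.
Variables (R : comPzRingType) (T : eqType).

Definition lmul_word (a : seq T) (g : ncp R T) : ncp R T :=
  fun w => if take (size a) w == a then g (drop (size a) w) else 0.

Definition rmul_word (b : seq T) (g : ncp R T) : ncp R T :=
  fun w => if drop (size w - size b) w == b then g (take (size w - size b) w)
           else 0.

Definition sandwich (x : seq T) (g : ncp R T) (y : seq T) : ncp R T :=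
  rmul_word y (lmul_word x g).

Lemma prefixP (a w : seq T) :
  reflect (exists v, w = a ++ v) (take (size a) w == a).
Proof.
apply: (iffP eqP) => [E|[v ->]]; last by rewrite take_size_cat.
by exists (drop (size a) w); rewrite -{1}(cat_take_drop (size a) w) E.
Qed.

Lemma suffixP (b w : seq T) :
  reflect (exists u, w = u ++ b) (drop (size w - size b) w == b).
Proof.
apply: (iffP eqP) => [E|[u ->]]; last by rewrite size_cat addnK drop_size_cat.
exists (take (size w - size b) w).
by rewrite -{1}(cat_take_drop (size w - size b) w) E.
Qed.

Lemma lmul_word_cat a g v : lmul_word a g (a ++ v) = g v.
Proof. by rewrite /lmul_word take_size_cat // eqxx drop_size_cat. Qed.

Lemma lmul_word_out a g w : ~ (exists v, w = a ++ v) -> lmul_word a g w = 0.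
Proof. by rewrite /lmul_word; case: prefixP. Qed.

Lemma rmul_word_cat b g u : rmul_word b g (u ++ b) = g u.
Proof. by rewrite /rmul_word size_cat addnK drop_size_cat // eqxx take_size_cat. Qed.

Lemma rmul_word_out b g w : ~ (exists u, w = u ++ b) -> rmul_word b g w = 0.
Proof. by rewrite /rmul_word; case: suffixP. Qed.

Lemma eq_lmul_word a f g : f =1 g -> lmul_word a f =1 lmul_word a g.
Proof. by move=> fg w; rewrite /lmul_word fg. Qed.

Lemma eq_rmul_word b f g : f =1 g -> rmul_word b f =1 rmul_word b g.
Proof. by move=> fg w; rewrite /rmul_word fg. Qed.

Lemma eq_sandwich x f g y : f =1 g -> sandwich x f y =1 sandwich x g y.
Proof. by move=> fg; apply/eq_rmul_word/eq_lmul_word. Qed.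

Lemma lmul_wordA a a' g : lmul_word a (lmul_word a' g) =1 lmul_word (a ++ a') g.
Proof.
move=> w; case: (prefixP (a ++ a') w) => [[v ->]|Nw].
  by rewrite lmul_word_cat -catA !lmul_word_cat.
rewrite (lmul_word_out _ Nw); case: (prefixP a w) => [[x Ew]|?]; last first.
  by rewrite lmul_word_out.
rewrite Ew lmul_word_cat lmul_word_out // => -[y Ey].
by apply: Nw; exists y; rewrite Ew Ey catA.
Qed.

Lemma rmul_wordA b b' g : rmul_word b (rmul_word b' g) =1 rmul_word (b' ++ b) g.
Proof.
move=> w; case: (suffixP (b' ++ b) w) => [[u ->]|Nw].
  by rewrite rmul_word_cat catA !rmul_word_cat.
rewrite (rmul_word_out _ Nw); case: (suffixP b w) => [[x Ew]|?]; last first.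
  by rewrite rmul_word_out.
rewrite Ew rmul_word_cat rmul_word_out // => -[y Ey].
by apply: Nw; exists y; rewrite Ew Ey -catA.
Qed.

Lemma lmul_rmul_word a b g :
  lmul_word a (rmul_word b g) =1 rmul_word b (lmul_word a g).
Proof.
move=> w; case: (prefixP a w) => [[x ->]|Nw]; last first.
  rewrite lmul_word_out //; case: (suffixP b w) => [[z Ez]|?]; last first.
    by rewrite rmul_word_out.
  rewrite Ez rmul_word_cat lmul_word_out // => -[y Ey].
  by apply: Nw; exists (y ++ b); rewrite Ez Ey catA.
rewrite lmul_word_cat; case: (suffixP b x) => [[y ->]|Nx].
  by rewrite rmul_word_cat catA rmul_word_cat lmul_word_cat.
rewrite rmul_word_out //; case: (suffixP b (a ++ x)) => [[z Ez]|?]; last first.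
  by rewrite rmul_word_out.
rewrite Ez rmul_word_cat lmul_word_out // => -[y Ey].
by apply: Nx; exists y; move/(congr1 (drop (size a))): Ez;
  rewrite Ey -catA !drop_size_cat.
Qed.

Lemma sandwichA x a g b y :
  sandwich x (sandwich a g b) y =1 sandwich (x ++ a) g (b ++ y).
Proof.
move=> w; rewrite /sandwich -rmul_wordA; apply: eq_rmul_word => v.
by rewrite lmul_rmul_word; apply: eq_rmul_word => u; apply: lmul_wordA.
Qed.

Lemma ncmul_wordl a g : ncmul (ncword R a) g =1 lmul_word a g.
Proof.
move=> w; rewrite /ncmul /ncword.
rewrite (eq_bigr (fun i : 'I_(size w).+1 =>
   if i == size a :> nat then lmul_word a g w else 0)); last first.
  move=> i _; case: (eqVneq (i : nat) (size a)) => [ia|ia].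
    by rewrite /lmul_word -ia; case: ifP; rewrite ?mul1r ?mul0r.
  case: eqP => [Ei|]; last by rewrite mul0r.
  by move: ia; rewrite -Ei size_takel ?eqxx // -ltnS ltn_ord.
case: (ltnP (size a) (size w).+1) => [aw|wa].
  rewrite (bigD1 (Ordinal aw)) //= eqxx big1 ?addr0 // => i.
  by rewrite -(inj_eq val_inj) /= => /negbTE ->.
rewrite big1 => [|i _]; last first.
  by case: eqP => // Ei; move: wa; rewrite -Ei ltnNge -ltnS ltn_ord.
rewrite lmul_word_out // => -[v Ew].
by move: wa; rewrite Ew size_cat ltnNge leq_addr.
Qed.

Lemma ncmul_wordr b g : ncmul g (ncword R b) =1 rmul_word b g.
Proof.
move=> w; rewrite /ncmul /ncword.
have wb : (size w - size b < (size w).+1)%N by rewrite ltnS leq_subr.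
rewrite (bigD1 (Ordinal wb)) //= big1 ?addr0.
  by rewrite /rmul_word; case: ifP; rewrite ?mulr1 ?mulr0.
move=> i; rewrite -(inj_eq val_inj) /= => /eqP ib.
case: eqP => [Ei|]; last by rewrite mulr0.
have : size (drop i w) = size b by rewrite Ei.
by rewrite size_drop => sb; case: ib; rewrite -sb subKn ?leq_ord.
Qed.

Lemma ncmul_sandwich a g b :
  ncmul (ncmul (ncword R a) g) (ncword R b) =1 sandwich a g b.
Proof. by move=> w; rewrite ncmul_wordr; apply/eq_rmul_word/ncmul_wordl. Qed.

Lemma sandwich_word x v y : sandwich x (ncword R v) y =1 ncword R (x ++ v ++ y).
Proof.
move=> w; rewrite /sandwich /ncword catA.
case: (suffixP y w) => [[u ->]|Nw]; last first.
  rewrite rmul_word_out //; case: eqP => // Ew.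
  by case: Nw; exists (x ++ v); rewrite Ew.
have catIr s : (u ++ y == s ++ y) = (u == s).
  apply/eqP/eqP => [Eu|-> //].
  have us : size u = size s by move/(congr1 size): Eu; rewrite !size_cat => /addIn.
  by move/eqP: Eu; rewrite eqseq_cat // => /andP[/eqP].
rewrite rmul_word_cat catIr.
case: (prefixP x u) => [[z ->]|Nu]; first by rewrite lmul_word_cat eqseq_cat // eqxx.
rewrite lmul_word_out //; case: eqP => // Eu.
by case: Nu; exists v.
Qed.

Lemma sandwich_sub x f g y w :
  sandwich x (ncsub f g) y w = sandwich x f y w - sandwich x g y w.
Proof.
by rewrite /sandwich /rmul_word /lmul_word /ncsub; (repeat case: ifP => _); rewrite ?subr0.
Qed.

Lemma sandwich_scale x k f y w :
  sandwich x (ncscale k f) y w = k * sandwich x f y w.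
Proof.
by rewrite /sandwich /rmul_word /lmul_word /ncscale; (repeat case: ifP => _); rewrite ?mulr0.
Qed.

Lemma sandwich_sum x m (k : 'I_m -> R) (F : 'I_m -> ncp R T) y w :
  sandwich x (fun v => \sum_(i < m) k i * F i v) y w =
  \sum_(i < m) k i * sandwich x (F i) y w.
Proof.
rewrite /sandwich /rmul_word /lmul_word; (repeat case: ifP => _) => //;
by rewrite big1 // => i _; rewrite mulr0.
Qed.

Section IdealClosure.
Variable G : ncp R T -> Prop.

Lemma eq_in_ideal f f' : f =1 f' -> in_ideal G f -> in_ideal G f'.
Proof.
move=> ff' [m [c [a [b [g [Gg Ef]]]]]].
by exists m, c, a, b, g; split=> // w; rewrite -ff'.
Qed.

Lemma in_ideal0 : in_ideal G (fun _ => 0).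
Proof.
exists 0%N, (fun _ => 0), (fun _ => [::]), (fun _ => [::]), (fun _ _ => 0).
by split=> [[]|w]; rewrite // big_ord0.
Qed.

Lemma in_idealZ k f : in_ideal G f -> in_ideal G (fun w => k * f w).
Proof.
move=> [m [c [a [b [g [Gg Ef]]]]]].
exists m, (fun i => k * c i), a, b, g; split=> // w.
by rewrite Ef mulr_sumr; apply: eq_bigr => i _; rewrite mulrA.
Qed.

Lemma in_idealD f1 f2 :
  in_ideal G f1 -> in_ideal G f2 -> in_ideal G (fun w => f1 w + f2 w).
Proof.
move=> [m1 [c1 [a1 [b1 [g1 [Gg1 Ef1]]]]]] [m2 [c2 [a2 [b2 [g2 [Gg2 Ef2]]]]]].
pose join X (x1 : 'I_m1 -> X) (x2 : 'I_m2 -> X) (i : 'I_(m1 + m2)) :=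
  match split i with inl j => x1 j | inr j => x2 j end.
have joinl X x1 x2 j : @join X x1 x2 (lshift m2 j) = x1 j.
  by rewrite /join -[lshift _ _]/(unsplit (inl j)) unsplitK.
have joinr X x1 x2 j : @join X x1 x2 (rshift m1 j) = x2 j.
  by rewrite /join -[rshift _ _]/(unsplit (inr j)) unsplitK.
exists (m1 + m2)%N, (join _ c1 c2), (join _ a1 a2), (join _ b1 b2), (join _ g1 g2).
split=> [i|w]; first by rewrite /join; case: split.
by rewrite big_split_ord Ef1 Ef2; congr (_ + _); apply: eq_bigr => i _;
  rewrite ?joinl ?joinr.
Qed.

Lemma in_ideal_sum m (k : 'I_m -> R) (F : 'I_m -> ncp R T) :
  (forall i, in_ideal G (F i)) -> in_ideal G (fun w => \sum_(i < m) k i * F i w).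
Proof.
elim: m k F => [|m IHm] k F GF.
  by apply: eq_in_ideal in_ideal0 => w; rewrite big_ord0.
apply: (@eq_in_ideal (fun w => \sum_(i < m) k (widen_ord _ i) * F (widen_ord _ i) w
                                + k ord_max * F ord_max w)).
  by move=> w; rewrite big_ord_recr.
by apply: in_idealD; [apply: IHm | apply: in_idealZ].
Qed.

Lemma in_ideal_sandwich x g y : in_ideal G g -> in_ideal G (sandwich x g y).
Proof.
move=> [m [c [a [b [h [Gh Eg]]]]]].
exists m, c, (fun i => x ++ a i), (fun i => b i ++ y), h; split=> // w.
rewrite (eq_sandwich x y Eg) sandwich_sum; apply: eq_bigr => i _.
by rewrite ncmul_sandwich -sandwichA; congr (_ * _); apply/eq_sandwich/ncmul_sandwich.
Qed.

Lemma in_ideal_sandwich_gen x g y : G g -> in_ideal G (sandwich x g y).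
Proof.
move=> Gg; apply: in_ideal_sandwich.
exists 1%N, (fun _ => 1), (fun _ => [::]), (fun _ => [::]), (fun _ => g).
split=> // w; rewrite big_ord1 mul1r ncmul_sandwich /sandwich /rmul_word subn0.
by rewrite drop_size eqxx take_size /lmul_word take0 drop0.
Qed.

End IdealClosure.
End WordMultiplication.

Definition ncintr (T : Type) (h : ncp int T) : ncp Qt T := fun w => (h w)%:~R.

Lemma ncintr_sandwich (T : eqType) x (h : ncp int T) y w :
  (sandwich x h y w)%:~R = sandwich x (ncintr h) y w.
Proof. by rewrite /sandwich /rmul_word /lmul_word; (repeat case: ifP => _). Qed.

Lemma ncintr_word (T : eqType) (v : seq T) : ncintr (ncword int v) =1 ncword Qt v.
Proof. by move=> w; rewrite /ncintr /ncword; case: eqP. Qed.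

Lemma ncintr_sub (T : eqType) (v1 v2 : seq T) w :
  ncintr (ncsub (ncword int v1) (ncword int v2)) w = ncword Qt v1 w - ncword Qt v2 w.
Proof. by rewrite /ncintr /ncsub intrB -!/(ncintr _ w) !ncintr_word. Qed.

Section NaturalUnitIntervalOrder.
Variables (n : nat) (ltP : rel 'I_n).
Hypothesis hP : is_NUIO ltP.

Definition comm_gen (a c : 'I_n) : ncp Qt 'I_n :=
  ncsub (ncword Qt [:: c; a]) (ncword Qt [:: a; c]).

Definition qcomm_gen (a b : 'I_n) : ncp Qt 'I_n :=
  ncsub (ncword Qt [:: b; a]) (ncscale tQ (ncword Qt [:: a; b])).

Lemma comm_sandwich_in_ideal x a c y :
  ltP a c -> in_ideal (T_gens ltP) (sandwich x (comm_gen a c) y).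
Proof. by move=> ac; apply: in_ideal_sandwich_gen; left; exists a, c. Qed.

Lemma qcomm_sandwich_in_ideal x (a b : 'I_n) y : (a < b)%N -> incP ltP a b ->
  in_ideal (T_gens ltP) (sandwich x (qcomm_gen a b) y).
Proof. by move=> ab iab; apply: in_ideal_sandwich_gen; right; exists a, b. Qed.

Lemma plac_incomparable_in_ideal (a b c : 'I_n) : incP ltP a b -> incP ltP b c -> ltP a c ->
  in_ideal (T_gens ltP) (ncintr (ncsub (ncword int [:: c; a; b])
                                       (ncword int [:: b; c; a]))).
Proof.
have [irrP _ _ nuioP] := hP; move=> iab ibc ac.
have nac : a != c by apply: contraTneq ac => ->; rewrite irrP.
have [<-|nab] := eqVneq a b.
  apply: (eq_in_ideal _ (comm_sandwich_in_ideal [::] [:: a] ac)) => w.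
  by rewrite ncintr_sub sandwich_sub !sandwich_word.
have [bc|nbc] := eqVneq b c.
  apply: (eq_in_ideal _ (in_idealZ (-1) (comm_sandwich_in_ideal [:: c] [::] ac))).
  by move=> w; rewrite ncintr_sub sandwich_sub !sandwich_word bc /=; ring.
have /andP[ab bc] := nuioP a b c nab nbc nac iab ibc ac.
apply: (eq_in_ideal _ (in_idealD
  (in_idealD (comm_sandwich_in_ideal [::] [:: b] ac)
             (qcomm_sandwich_in_ideal [:: a] [::] bc ibc))
  (in_idealD (in_idealZ (-1) (comm_sandwich_in_ideal [:: b] [::] ac))
             (in_idealZ (-1) (qcomm_sandwich_in_ideal [::] [:: c] ab iab))))).
move=> w; rewrite ncintr_sub !sandwich_sub !sandwich_scale !sandwich_word /=.
ring.
Qed.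

Lemma plac_gen_in_ideal g :
  plac_gens ltP g -> in_ideal (T_gens ltP) (ncintr g).
Proof.
move=> [a [b [c [[_ _ ac Eg]|[_ _ ac Eg]|[iab ibc ac Eg]]]]];
  apply: (eq_in_ideal (fun w => esym (congr1 intr (Eg w)))).
- apply: (eq_in_ideal _ (in_idealZ (-1) (comm_sandwich_in_ideal [:: b] [::] ac))).
  by move=> w; rewrite -/(ncintr _ w) ncintr_sub sandwich_sub !sandwich_word /=; ring.
- apply: (eq_in_ideal _ (comm_sandwich_in_ideal [::] [:: b] ac)) => w.
  by rewrite -/(ncintr _ w) ncintr_sub sandwich_sub !sandwich_word.
- exact: plac_incomparable_in_ideal.
Qed.

Lemma ncintr_in_ideal h :
  in_ideal (plac_gens ltP) h -> in_ideal (T_gens ltP) (ncintr h).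
Proof.
move=> [m [d [a [b [g [Gg Eh]]]]]].
apply: (@eq_in_ideal _ _ _
  (fun w => \sum_(j < m) (d j)%:~R * sandwich (a j) (ncintr (g j)) (b j) w)).
  move=> w; rewrite /ncintr Eh rmorph_sum /=; apply: eq_bigr => j _.
  by rewrite rmorphM /= ncmul_sandwich ncintr_sandwich.
apply: in_ideal_sum => j.
exact/in_ideal_sandwich/plac_gen_in_ideal.
Qed.

End NaturalUnitIntervalOrder.

Theorem mainTheorem5 (n : nat) (ltP : rel 'I_n) (hP : is_NUIO ltP)
  (f : ncp Qt 'I_n) :
  in_Qt_tensor_plac ltP f -> in_ideal (T_gens ltP) f.
Proof.
move=> [m [c [h [Hh Ef]]]].
apply: (@eq_in_ideal _ _ _ (fun w => \sum_(i < m) c i * ncintr (h i) w)).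
  by move=> w; rewrite Ef.
by apply: in_ideal_sum => i; apply: ncintr_in_ideal.
Qed.
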